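(* Consider any instance of the rescheduling problem $(1, h_1 \mid \Delta_{\max}\le k \mid \mu\Delta_{\max} + \sum_{j=1}^n w_j C_j)$ described in the context, and let $\sigma^*$ be an optimal schedule with the following properties: the jobs of its earlier schedule are processed in increasing index order; the jobs of its later schedule are processed in increasing index order; $C_j(\sigma^* )\le C_j(\pi^* )$ for every earlier-schedule job; the earlier schedule has at most one idle period; every earlier-schedule job processed after the idle period satisfies $C_j(\pi^* )-C_j(\sigma^* )=\Delta_{\max}(\sigma^* )$; those jobs have consecutive indices; the first of them, $J_j$, satisfies $S_j(\pi^* )\ge T_2$; the machine does not idle in the later schedule; and the first job of the later schedule has maximum time deviation among later-schedule jobs. Suppose $J_a$ is the first job in the later schedule of $\sigma^*$. Then for every index $j>a$ with $S_j(\pi^* )<T_2$, if $J_j$ is in the earlier schedule of $\sigma^*$ then $\Delta_j<\Delta_a$.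
   Context: An instance consists of $n$ jobs $J_1,\dots,J_n$, where $J_j$ has a positive integer processing time $p_j$ and positive integer weight $w_j$, indexed so that $p_1/w_1\le\cdots\le p_n/w_n$; integers $0\le T_1<T_2$ (machine unavailable during $[T_1,T_2]$); an integer $k$; a rational $\mu\ge0$. The original schedule $\pi^*$ processes $J_1,\dots,J_n$ in order consecutively from time $0$ without idling, so $S_j(\pi^* )=\sum_{i<j}p_i$, $C_j(\pi^* )=\sum_{i\le j}p_i$. A schedule $\sigma$ gives start times $S_j(\sigma)\ge0$, non-preemptive single-machine processing, $C_j(\sigma)=S_j(\sigma)+p_j$, no overlaps, and each job has $C_j(\sigma)\le T_1$ or $S_j(\sigma)\ge T_2$. $\Delta_j=|C_j(\sigma)-C_j(\pi^* )|$ (for $\sigma=\sigma^*$), $\Delta_{\max}=\max_j\Delta_j$. Feasible means $\Delta_{\max}\le k$; optimal means feasible minimizing $\mu\Delta_{\max}+\sum_j w_jC_j(\sigma)$. The earlier schedule consists of jobs with $C_j(\sigma)\le T_1$; the later schedule of jobs completed after $T_2$. An idle period of the earlier schedule is a maximal interval of positive length within $[0,c]$ ($c$ the largest completion time of an earlier job) with no processing; the machine idles in the later schedule if some positive-length interval within $[T_2,c']$ ($c'$ the largest completion time of a later job) has no processing. Standing assumptions: some job has $C_j(\pi^* )>T_1$; with $j_1$ the smallest such index, $\min_jp_j\le T_1<\sum_jp_j$ and $T_2-S_{j_1}(\pi^* )\le k$. *)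

(* Rescheduling on a single machine with one unavailability
   interval [T1,T2]; jobs indexed by 'I_n (0-based, J_{j+1} in the paper is
   index j here). Times are rationals. *)
From mathcomp Require Import all_boot all_order all_algebra.
Set Implicit Arguments. Unset Strict Implicit. Unset Printing Implicit Defensive.
Import Order.TTheory GRing.Theory Num.Theory.
Local Open Scope ring_scope.

Section Resched.
Variables (n : nat) (p w : 'I_n -> nat) (T1 T2 : nat) (k : int) (mu : rat).

Definition Spi (j : 'I_n) : rat := (\sum_(i < n | (i < j)%N) p i)%:R.
Definition Cpi (j : 'I_n) : rat := (\sum_(i < n | (i <= j)%N) p i)%:R.

Definition sched := 'I_n -> rat.

Definition C (S : sched) (j : 'I_n) : rat := S j + (p j)%:R.

Definition is_schedule (S : sched) : Prop :=
  [/\ forall j, 0 <= S j,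
      forall i j, i != j -> C S i <= S j \/ C S j <= S i
    & forall j, C S j <= T1%:R \/ T2%:R <= S j].

Definition Delta (S : sched) (j : 'I_n) : rat := `|C S j - Cpi j|.
Definition Dmax (S : sched) : rat := \big[Num.max/0]_(j < n) Delta S j.

Definition feasible (S : sched) : Prop :=
  is_schedule S /\ forall j, Delta S j <= k%:~R.

Definition objective (S : sched) : rat :=
  mu * Dmax S + \sum_(j < n) (w j)%:R * C S j.

Definition optimal (S : sched) : Prop :=
  feasible S /\ forall S', feasible S' -> objective S <= objective S'.

Definition earlier (S : sched) (j : 'I_n) : Prop := C S j <= T1%:R.
Definition later (S : sched) (j : 'I_n) : Prop := T2%:R < C S j.

Definition processing (S : sched) (t : rat) : Prop :=
  exists j, S j < t < C S j.

(* largest completion time of an earlier (resp. later) job; 0 if none *)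
Definition c_earlier (S : sched) : rat :=
  \big[Num.max/0]_(j < n | C S j <= T1%:R) C S j.
Definition c_later (S : sched) : rat :=
  \big[Num.max/0]_(j < n | T2%:R < C S j) C S j.

Definition idle_interval (S : sched) (a b : rat) : Prop :=
  [/\ 0 <= a, a < b, b <= c_earlier S
    & forall t, a < t < b -> ~ processing S t].

Definition idle_period (S : sched) (a b : rat) : Prop :=
  idle_interval S a b /\
  forall a' b', a' <= a -> b <= b' -> idle_interval S a' b' -> a' = a /\ b' = b.

Definition at_most_one_idle_period (S : sched) : Prop :=
  forall a b a' b', idle_period S a b -> idle_period S a' b' -> a = a' /\ b = b'.

Definition after_idle (S : sched) (b : rat) (j : 'I_n) : Prop :=
  earlier S j /\ b <= S j.

Definition no_idle_later (S : sched) : Prop :=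
  ~ exists u v, [/\ T2%:R <= u, u < v, v <= c_later S
                  & forall t, u < t < v -> ~ processing S t].

Definition first_later (S : sched) (a : 'I_n) : Prop :=
  later S a /\ forall i, later S i -> S a <= S i.

Definition good_optimal (S : sched) : Prop :=
  optimal S /\
  (forall i j, earlier S i -> earlier S j -> (i < j)%N -> S i < S j) /\
  (forall i j, later S i -> later S j -> (i < j)%N -> S i < S j) /\
  (forall j, earlier S j -> C S j <= Cpi j) /\
  at_most_one_idle_period S /\
  (forall a b, idle_period S a b ->
     [/\ (forall j, after_idle S b j -> Cpi j - C S j = Dmax S),
         (forall i j l : 'I_n, after_idle S b i -> after_idle S b j ->
             (i <= l <= j)%N -> after_idle S b l)
       & (forall j, after_idle S b j ->
             (forall i, after_idle S b i -> S j <= S i) ->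
             T2%:R <= Spi j)]) /\
  no_idle_later S /\
  (forall a, first_later S a -> forall i, later S i -> Delta S i <= Delta S a).

Definition instance_ok : Prop :=
  (forall j, 0 < p j)%N /\ (forall j, 0 < w j)%N /\
  (* p_i/w_i nondecreasing in the index *)
  (forall i j : 'I_n, (i <= j)%N -> (p i * w j <= p j * w i)%N) /\
  (T1 < T2)%N /\ 0 <= mu /\
  exists j1 : 'I_n,
    T1%:R < Cpi j1 /\
    (forall j, T1%:R < Cpi j -> (j1 <= j)%N) /\
    (exists j, (p j <= T1)%N) /\
    (T1 < \sum_(j < n) p j)%N /\
    T2%:R - Spi j1 <= k%:~R.

End Resched.

(* Every job preceding J_a in pi is earlier: a later one would start
   after J_a, against the index order of the later schedule.  All of them are
   processed before J_j, hence S_j(sigma) >= S_a(pi).  As J_j does not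
   complete later than in pi,
     Delta_j = S_j(pi) - S_j(sigma) <= S_j(pi) - S_a(pi)
             < T2 - S_a(pi) <= S_a(sigma) - S_a(pi) <= Delta_a. *)
From mathcomp Require Import all_boot all_order all_algebra.
From mathcomp Require Import lra.
Set Implicit Arguments.
Unset Strict Implicit.
Unset Printing Implicit Defensive.
Import Order.TTheory GRing.Theory Num.Theory.
Local Open Scope ring_scope.

Section Deviation.
Variables (n : nat) (p : 'I_n -> nat).

Lemma Cpi_Spi (j : 'I_n) : Cpi p j = Spi p j + (p j)%:R.
Proof.
rewrite /Cpi /Spi -natrD (bigD1 j) //= addnC; congr (_ + _)%:R.
by apply: eq_bigl => i; rewrite ltn_neqAle andbC.
Qed.

Lemma Delta_start (S : sched n) (j : 'I_n) : Delta p S j = `|S j - Spi p j|.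
Proof. by rewrite /Delta /C Cpi_Spi opprD addrACA subrr addr0. Qed.

End Deviation.

Section Packing.
Variables (n : nat) (p : 'I_n -> nat) (S : sched n) (P : pred 'I_n).
Hypothesis S_ge0 : forall j, 0 <= S j.
Hypothesis no_overlap : forall i j, i != j -> C p S i <= S j \/ C p S j <= S i.
Hypothesis P_ordered : forall i j, P i -> P j -> (i < j)%N -> S i < S j.

Lemma C_le_start (i j : 'I_n) : S i < S j -> C p S i <= S j.
Proof.
move=> ltSij; have neq_ij : i != j by apply: contraTneq ltSij => ->; rewrite ltxx.
case: (no_overlap neq_ij) => // le_CjSi.
by move: le_CjSi ltSij; rewrite /C; have := ler0n rat (p j); lra.
Qed.

Lemma sum_ltnS_cond (F : 'I_n -> nat) (o : 'I_n) :
  (\sum_(i < n | (i < o.+1)%N && P i) F i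
     = \sum_(i < n | (i < o)%N && P i) F i + P o * F o)%N.
Proof.
case Po: (P o); last first.
  rewrite mul0n addn0; apply: eq_bigl => i; rewrite ltnS leq_eqVlt.
  by case: eqP => [/val_inj -> | _]; rewrite ?Po ?andbF.
rewrite mul1n (bigD1 o) /= ?ltnSn ?Po // addnC; congr (_ + _)%N.
by apply: eq_bigl => i; rewrite ltnS -andbA andbC -andbA -ltn_neqAle andbC.
Qed.

Lemma load_before_le_start (j : 'I_n) : P j ->
  (\sum_(i < n | (i < j)%N && P i) p i)%:R <= S j.
Proof.
move=> Pj; suff load_le : forall m (l : 'I_n), P l -> (m <= l)%N ->
    (\sum_(i < n | (i < m)%N && P i) p i)%:R <= S l by exact: load_le.
elim=> [|m IHm] l Pl lt_ml; first by rewrite big_pred0.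
pose o := Ordinal (ltn_trans lt_ml (ltn_ord l)).
rewrite (sum_ltnS_cond _ o) natrD.
case Po: (P o); last by rewrite mul0n addr0 IHm // ltnW.
have load_o := IHm o Po (leqnn m).
have := C_le_start (P_ordered Po Pl lt_ml).
by rewrite mul1n /C; lra.
Qed.

End Packing.

Section Schedule.
Variables (n : nat) (p : 'I_n -> nat) (T1 T2 : nat) (S : sched n).
Hypothesis sched_S : is_schedule p T1 T2 S.
Hypothesis p_gt0 : forall j, (0 < p j)%N.
Hypothesis earlier_ordered :
  forall i j, earlier p T1 S i -> earlier p T1 S j -> (i < j)%N -> S i < S j.
Hypothesis later_ordered :
  forall i j, later p T2 S i -> later p T2 S j -> (i < j)%N -> S i < S j.

Lemma later_start_ge (j : 'I_n) : (T1 <= T2)%N -> later p T2 S j -> T2%:R <= S j.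
Proof.
rewrite /later -(ler_nat rat) => le_T12 lt_T2C.
by case: sched_S => _ _ /(_ j) []; lra.
Qed.

Lemma not_earlier_later (j : 'I_n) : ~ earlier p T1 S j -> later p T2 S j.
Proof.
have := p_gt0 j; rewrite /earlier /later /C -(ltr_nat rat) => p_gt0j not_earlier.
by case: sched_S => _ _ /(_ j) [] //; lra.
Qed.

Lemma earlier_before_first_later (a i : 'I_n) :
  first_later p T2 S a -> (i < a)%N -> earlier p T1 S i.
Proof.
move=> [later_a first_a] lt_ia; apply: contraT => /negP /not_earlier_later later_i.
by have := later_ordered later_i later_a lt_ia; have := first_a i later_i; lra.
Qed.

Lemma Spi_first_later_le_start (a j : 'I_n) :
  first_later p T2 S a -> (a < j)%N -> earlier p T1 S j -> Spi p a <= S j.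
Proof.
move=> first_a lt_aj earlier_j; have [S_ge0 no_overlap _] := sched_S.
apply: le_trans (load_before_le_start S_ge0 no_overlap earlier_ordered earlier_j).
rewrite ler_nat (sub_le_big leqnn (fun x y => leq_addr y x)) // => i lt_ia.
by rewrite (ltn_trans lt_ia lt_aj) (earlier_before_first_later first_a lt_ia).
Qed.

End Schedule.

Theorem corollary3 (n : nat) (p w : 'I_n -> nat) (T1 T2 : nat) (k : int)
  (mu : rat) (S : 'I_n -> rat) (a : 'I_n) :
  instance_ok p w T1 T2 k mu ->
  good_optimal p w T1 T2 k mu S ->
  first_later p T2 S a ->
  forall j : 'I_n, (a < j)%N -> Spi p j < T2%:R ->
    earlier p T1 S j -> Delta p S j < Delta p S a.
Proof.
move=> [p_gt0 [_ [_ [lt_T12 _]]]] [[[sched_S _] _] [earlier_ordered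
  [later_ordered [C_le_Cpi _]]]] first_a j lt_aj lt_Spi_T2 earlier_j.
have le_T2_Sa := later_start_ge sched_S (ltnW lt_T12) first_a.1.
have le_Spia_Sj :=
  Spi_first_later_le_start sched_S p_gt0 earlier_ordered later_ordered first_a lt_aj earlier_j.
have le_Sj_Spij : S j <= Spi p j.
  by have := C_le_Cpi j earlier_j; rewrite Cpi_Spi /C; lra.
rewrite !Delta_start ler0_norm ?subr_le0 //.
by apply: lt_le_trans (ler_norm _); lra.
Qed.
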